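(* Let $m,K$ be positive integers and $b_1,\dots,b_{3m}$ positive integers with $K/4<b_i<K/2$ and $\sum_i b_i=mK$. Set $W=100(5m)^2K$, $a_i=b_i+W$, $L=3W+K$, $\epsilon=1/(400(5m)^2)$, $h=\lfloor 4\epsilon L\rfloor$, $H=L+h$, $\beta_0=h/H$, $\beta_i=a_i/H-1/3$ ($1\le i\le 3m$). Let $X$ be the multiset consisting of $a_1,\dots,a_{3m}$, $m$ copies of $-H$ and $m$ copies of $h$, and let $T_{\min}$ be a minimum-cost addition tree over $X$. Then in $T_{\min}$, if two sibling nodes are such that one of them is a type-0 node, the other is also a type-0 node.
   Context: An addition tree over a multiset $X$ is a full binary tree whose leaves are labeled by the elements of $X$ (each used once), each internal node having value equal to the sum of its children's values; its cost is the sum of the absolute values of its internal nodes, and $T_{\min}$ minimizes the cost. A ''$\lambda$'' denotes a sum of at most $5m$ numbers each of the form $\pm\beta_i$ with $0\le i\le 3m$. Every node value of an addition tree over $X$ can be written as $(N/3+\lambda)H$ with $N$ an integer and $\lambda$ such a sum; since $|\lambda|\le 5m\cdot 4\epsilon=1/(500m)$, the integer $N$ and the real number $\lambda$ are uniquely determined. A node is type-0 if its value is of the form $\lambda H$, i.e. $N=0$. *)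

From mathcomp Require Import all_boot all_order all_algebra.
Set Implicit Arguments. Unset Strict Implicit. Unset Printing Implicit Defensive.
Import Order.TTheory GRing.Theory Num.Theory.
Local Open Scope ring_scope.

Inductive atree := ALeaf of rat | ANode of atree & atree.

Fixpoint tval (t : atree) : rat :=
  match t with ALeaf x => x | ANode l r => tval l + tval r end.

Fixpoint leaves (t : atree) : seq rat :=
  match t with ALeaf x => [:: x] | ANode l r => leaves l ++ leaves r end.

Fixpoint cost (t : atree) : rat :=
  match t with ALeaf _ => 0 | ANode l r => `|tval (ANode l r)| + cost l + cost r end.

Definition addition_tree_over (X : seq rat) (t : atree) : Prop :=
  perm_eq (leaves t) X.

Definition min_cost_tree (X : seq rat) (t : atree) : Prop :=
  addition_tree_over X t /\ forall t', addition_tree_over X t' -> cost t <= cost t'.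

Inductive subtree (s : atree) : atree -> Prop :=
| sub_refl : subtree s s
| sub_l : forall l r, subtree s l -> subtree s (ANode l r)
| sub_r : forall l r, subtree s r -> subtree s (ANode l r).

Section Construction.
Variables (m K : nat) (b : nat -> nat).

Definition W : rat := 100 * ((5 * m)%:R) ^+ 2 * K%:R.
Definition a (i : nat) : rat := (b i)%:R + W.
Definition L : rat := 3 * W + K%:R.
Definition eps : rat := (400 * ((5 * m)%:R) ^+ 2)^-1.
Definition h : rat := (Num.floor (4 * eps * L))%:~R.
Definition H : rat := L + h.
Definition beta (i : nat) : rat :=
  if i == 0%N then h / H else a i / H - 3^-1.

Definition Xset : seq rat :=
  [seq a i | i <- iota 1 (3 * m)] ++ nseq m (- H) ++ nseq m h.

(* a "lambda": a sum of at most 5m numbers of the form +-beta_i, 0<=i<=3m;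
   a signed term is encoded as (negate?, i) *)
Definition lambda_sum (s : seq (bool * nat)) : rat :=
  \sum_(p <- s) (if p.1 then - beta p.2 else beta p.2).
Definition is_lambda_seq (s : seq (bool * nat)) : bool :=
  (size s <= 5 * m)%N && all (fun p => (p.2 <= 3 * m)%N) s.

Definition type0 (t : atree) : Prop :=
  exists s, is_lambda_seq s /\ tval t = lambda_sum s * H.

End Construction.

(* Take a node with children c and d in an addition tree over X, detach d and graft it onto
   the root.  The node's own term |c + d| disappears, each of the fewer than |X| ancestors of the
   node changes by at most |d|, and the new root costs |sum X|.  Here |X| = 5m and sum X = 0, so
   in a minimum-cost tree |c + d| <= 5m |d|.
   Every sum of elements of X is (N/3 + lambda) H with |lambda| <= 5m * 4 eps = 1/(500m).  If d is
   type-0, then |c + d| <= 5m |d| <= H/100, which leaves no room for N <> 0 in the value of c. *)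

From Pilot Require Import Defs.
From mathcomp Require Import all_boot all_order all_algebra.
From mathcomp Require Import zify ring lra.
Import Pilot.Defs. (* after mathcomp, so that [tval] is the tree value, not the tuple projection *)
Import Order.TTheory GRing.Theory Num.Theory.
Local Open Scope ring_scope.

Set Implicit Arguments.
Unset Strict Implicit.
Unset Printing Implicit Defensive.

Lemma tval_sum (t : atree) : tval t = \sum_(x <- leaves t) x.
Proof. by elim: t => [x|l IHl r IHr] /=; rewrite ?big_seq1 // big_cat IHl IHr. Qed.

Lemma size_leaves_gt0 (t : atree) : (0 < size (leaves t))%N.
Proof. by elim: t => [x|l IHl r IHr] //=; rewrite size_cat addn_gt0 IHl. Qed.

Lemma subtree_trans (s t u : atree) : subtree s t -> subtree t u -> subtree s u.
Proof. by move=> st; elim=> // [l r _ IH|l r _ IH]; [apply: sub_l | apply: sub_r]. Qed.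

Lemma subtree_leaves (s t : atree) :
  subtree s t -> exists rest, perm_eq (leaves t) (leaves s ++ rest).
Proof.
elim=> [|l r _ [rest IH]|l r _ [rest IH]] /=; first by exists [::]; rewrite cats0.
- by exists (rest ++ leaves r); rewrite catA perm_cat2r.
- by exists (leaves l ++ rest); rewrite perm_sym perm_catCA perm_cat2l perm_sym.
Qed.

Lemma regraft (s' : atree) {s t : atree} : subtree s t -> exists t', [/\
  perm_eq (leaves t ++ leaves s') (leaves t' ++ leaves s),
  tval t' = tval t - tval s + tval s' &
  cost t' <= cost t - cost s + cost s' + (size (leaves t))%:R * `|tval s' - tval s|].
Proof.
set d := tval s' - tval s.
have step (u u' v : atree) : tval u' = tval u + d ->
    cost u' <= cost u - cost s + cost s' + (size (leaves u))%:R * `|d| ->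
    `|tval u' + tval v| + cost u' + cost v <=
    `|tval u + tval v| + cost u + cost v - cost s + cost s' +
    (size (leaves u) + size (leaves v))%:R * `|d|.
  move=> Hv Hc.
  have Hn : `|tval u' + tval v| <= `|tval u + tval v| + `|d|.
    by rewrite Hv addrAC ler_normD.
  have Hd : `|d| <= (size (leaves v))%:R * `|d|.
    by rewrite ler_peMl // ler1n size_leaves_gt0.
  rewrite natrD mulrDl; lra.
elim=> [|l r _ [l' [Hp Hv Hc]]|l r _ [r' [Hp Hv Hc]]] /=.
- exists s'; split; first by rewrite perm_catC.
  + by rewrite subrr add0r.
  + by rewrite subrr add0r lerDl mulr_ge0.
- have Hd : tval l' = tval l + d by rewrite Hv /d; ring.
  exists (ANode l' r); split => /=.
  + by rewrite perm_catAC perm_sym perm_catAC perm_sym perm_cat2r.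
  + by rewrite Hd /d; ring.
  + by rewrite size_cat; apply: step.
- have Hd : tval r' = tval r + d by rewrite Hv /d; ring.
  exists (ANode l r'); split => /=.
  + by rewrite -!catA perm_cat2l.
  + by rewrite Hd /d; ring.
  + have := step _ _ l Hd Hc.
    by rewrite size_cat addnC (addrC (tval r)) (addrC (tval r')); lra.
Qed.

Lemma min_cost_sibling_le (X : seq rat) (T l r : atree) :
  min_cost_tree X T -> subtree (ANode l r) T ->
  `|tval l + tval r| <= (size X)%:R * `|tval l| + `|\sum_(x <- X) x| /\
  `|tval l + tval r| <= (size X)%:R * `|tval r| + `|\sum_(x <- X) x|.
Proof.
move=> [HT Hmin] Hsub.
have bound (c d : atree) : perm_eq (leaves c ++ leaves d) (leaves l ++ leaves r) ->
    tval c + tval d = tval l + tval r -> cost c + cost d = cost l + cost r ->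
    `|tval l + tval r| <= (size X)%:R * `|tval d| + `|\sum_(x <- X) x|.
  move=> Hp Hv Hc.
  have [T' [HpT HvT HcT]] := regraft c Hsub.
  have HT' : addition_tree_over X (ANode T' d).
    apply: perm_trans HT; rewrite -(perm_cat2r (leaves c)) perm_sym.
    apply: perm_trans HpT _; rewrite /= -catA perm_cat2l perm_sym.
    by apply: perm_trans Hp; rewrite perm_catC.
  move: (Hmin _ HT') HcT.
  rewrite /= HvT -(perm_size HT) -(perm_big _ HT) -tval_sum.
  have -> : tval c - (tval l + tval r) = - tval d by rewrite -Hv; ring.
  have -> : tval T - (tval l + tval r) + tval c + tval d = tval T by rewrite -Hv; ring.
  rewrite normrN; lra.
split; last exact: bound.
by apply: bound; [rewrite perm_catC | exact: addrC | exact: addrC].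
Qed.

Lemma small_third_int_eq0 {N : int} {x y : rat} :
  `|x + N%:~R / 3 + y| <= 1 / 100 -> `|x| <= 1 / 500 -> `|y| <= 1 / 500 -> N = 0.
Proof.
move=> /ler_normlP [s1 s2] /ler_normlP [x1 x2] /ler_normlP [y1 y2].
have : `|N%:~R : rat| < 1 by apply/ltr_normlP; split; lra.
by rewrite -intr_norm ltrz1; lia.
Qed.

Section Construction.
Variables (m K : nat) (b : nat -> nat).
Hypotheses (m_gt0 : (0 < m)%N) (K_gt0 : (0 < K)%N)
  (b_le : forall i, (1 <= i <= 3 * m)%N -> (b i <= K)%N)
  (b_sum : (\sum_(1 <= i < (3 * m).+1) b i = m * K)%N).
Local Notation Kr := (K%:R : rat).

Lemma eps_gt0 : 0 < eps m.
Proof. by rewrite /eps invr_gt0 mulr_gt0 // exprn_gt0 // ltr0n muln_gt0. Qed.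

Lemma eps_W : eps m * W m K = Kr / 4.
Proof. by rewrite /eps /W; field; rewrite pnatr_eq0 -lt0n. Qed.

Lemma W_ge0 : 0 <= W m K.
Proof. by apply: mulr_ge0; [apply: mulr_ge0; [exact: ler0n | exact: sqr_ge0] | exact: ler0n]. Qed.

Lemma L_gt0 : 0 < L m K.
Proof.
have := W_ge0; have : 0 < Kr by rewrite ltr0n.
(* [lra], [ring] and [field] must see [W m K], [H m K], ... as atoms: unfolded, they make the
   tactics compute with unary numerals.  Hence the generalizations before each call. *)
rewrite /L; move: (W m K) Kr => w k; lra.
Qed.

Lemma h_ge0 : 0 <= h m K.
Proof.
rewrite /h ler0z floor_ge0.
by apply: mulr_ge0; [apply: mulr_ge0; [exact: ler0n | exact: ltW eps_gt0] | exact: ltW L_gt0].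
Qed.

Lemma h_le : h m K <= 4 * eps m * L m K.
Proof. exact: floor_le. Qed.

Lemma H_gt0 : 0 < H m K.
Proof. exact: ltr_wpDr h_ge0 L_gt0. Qed.

Lemma K_le_eps_H : 3 * Kr <= 4 * (eps m * H m K).
Proof.
have := eps_W; have := ltW eps_gt0; have := h_ge0; have := ler0n rat K.
rewrite /H /L; move: (eps m) (W m K) (h m K) Kr => e w x k k0 x0 e0 eW.
have ek : 0 <= e * k := mulr_ge0 e0 k0.
have ex : 0 <= e * x := mulr_ge0 e0 x0.
have -> : e * (3 * w + k + x) = 3 * (e * w) + e * k + e * x by ring.
rewrite eW; lra.
Qed.

Lemma h_le_eps_H : h m K <= 4 * (eps m * H m K).
Proof.
have := h_le; have := h_ge0; have := eps_gt0.
rewrite /H; move: (eps m) (L m K) (h m K) => e l x e0 x0.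
have ex : 0 <= e * x := mulr_ge0 (ltW e0) x0.
rewrite -mulrA mulrDr; lra.
Qed.

Lemma beta_le i : (i <= 3 * m)%N -> `|beta m K b i| <= 4 * eps m.
Proof.
move=> i_le; have H0 := H_gt0; have hH := h_le_eps_H.
rewrite /beta; case: eqP => [_ | /eqP i0].
  rewrite ger0_norm; last exact: divr_ge0 h_ge0 (ltW H0).
  by rewrite (ler_pdivrMr _ _ H0) -mulrA.
have bK : (b i)%:R <= Kr by rewrite ler_nat; apply: b_le; rewrite lt0n i0 i_le.
have := K_le_eps_H; have := h_ge0; have := ler0n rat (b i).
have : H m K = 3 * W m K + Kr + h m K by [].
rewrite /a; move: H0 hH bK; move: (eps m) (H m K) (W m K) (h m K) (b i)%:R Kr.
move=> e y w x c k y0 xy ck HE c0 x0 ky.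
have -> : (c + w) / y - 3^-1 = (3 * c - k - x) / (3 * y).
  by rewrite HE; field; rewrite -HE lt0r_neq0.
have y3 : 0 < 3 * y by rewrite pmulr_rgt0.
have iy3 : 0 < (3 * y)^-1 by rewrite invr_gt0.
rewrite normrM (gtr0_norm iy3) (ler_pdivrMr _ _ y3) ler_norml.
lra.
Qed.

Lemma lambda_sum_le {s} : all (fun p : bool * nat => (p.2 <= 3 * m)%N) s ->
  `|lambda_sum m K b s| <= (size s)%:R * (4 * eps m).
Proof.
move=> /allP s_le; rewrite /lambda_sum -sum1_size natr_sum mulr_suml.
apply: le_trans; first exact: ler_norm_sum.
rewrite big_seq_cond [X in _ <= X]big_seq_cond; apply: ler_sum => p /andP [/s_le p_le _].
by rewrite mul1r; case: p.1; rewrite ?normrN; apply: beta_le.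
Qed.

Lemma lambda_le {s} : is_lambda_seq m s -> `|lambda_sum m K b s| <= (500 * m%:R)^-1.
Proof.
case/andP => s_size s_le; apply: le_trans (lambda_sum_le s_le) _.
have -> : (500 * m%:R)^-1 = (5 * m)%:R * (4 * eps m).
  by rewrite /eps natrM; field; rewrite pnatr_eq0 -lt0n.
apply: ler_wpM2r; last by rewrite ler_nat.
exact: mulr_ge0 (ler0n _ 4) (ltW eps_gt0).
Qed.

Lemma lambda_sum_cat s1 s2 :
  lambda_sum m K b (s1 ++ s2) = lambda_sum m K b s1 + lambda_sum m K b s2.
Proof. exact: big_cat. Qed.

Definition lambda_form (k : nat) (x : rat) : Prop :=
  exists (N : int) (s : seq (bool * nat)),
  [/\ (size s <= k)%N, all (fun p : bool * nat => (p.2 <= 3 * m)%N) s &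
      x = (N%:~R / 3 + lambda_sum m K b s) * H m K].

Lemma lambda_form0 : lambda_form 0 0.
Proof.
exists 0, [::]; split; [by [] | by [] |].
by rewrite /lambda_sum big_nil; move: (H m K) => y; ring.
Qed.

Lemma lambda_formD k1 k2 x1 x2 :
  lambda_form k1 x1 -> lambda_form k2 x2 -> lambda_form (k1 + k2) (x1 + x2).
Proof.
move=> [N1 [s1 [s1_size s1_le ->]]] [N2 [s2 [s2_size s2_le ->]]].
exists (N1 + N2), (s1 ++ s2).
split; [by rewrite size_cat leq_add | by rewrite all_cat s1_le |].
rewrite lambda_sum_cat intrD.
by move: (H m K) (lambda_sum m K b s1) (lambda_sum m K b s2) => y u v; ring.
Qed.

Lemma lambda_form_le k1 k2 x : (k1 <= k2)%N -> lambda_form k1 x -> lambda_form k2 x.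
Proof. by move=> k12 [N [s [s_size s_le ->]]]; exists N, s; rewrite (leq_trans s_size). Qed.

Lemma lambda_form_Xset x : x \in Xset m K b -> lambda_form 1 x.
Proof.
have H0 : H m K != 0 := lt0r_neq0 H_gt0.
have lambda1 i : lambda_sum m K b [:: (false, i)] = beta m K b i by exact: big_seq1.
rewrite !mem_cat => /or3P [/mapP [i] | /nseqP [-> _] | /nseqP [-> _]].
- rewrite mem_iota => /andP [i_ge1 i_lt] ->.
  exists 1, [:: (false, i)]; split; [by [] | by rewrite /= andbT -ltnS |].
  rewrite lambda1 /beta (gtn_eqF i_ge1).
  by move: (H m K) H0 (a m K b i) => y y0 u; field.
- exists (- 3%:Z), [::]; split; [by [] | by [] |]; rewrite /lambda_sum big_nil.
  by move: (H m K) H0 => y y0; field.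
- exists 0, [:: (false, 0%N)]; split; [by [] | by [] |]; rewrite lambda1 /beta eqxx.
  by move: (H m K) H0 (h m K) => y y0 u; field.
Qed.

Lemma lambda_form_sum Y : {subset Y <= Xset m K b} -> lambda_form (size Y) (\sum_(x <- Y) x).
Proof.
elim: Y => [|x Y IH] sub_X; first by rewrite big_nil; exact: lambda_form0.
rewrite big_cons; apply: (@lambda_formD 1 (size Y)).
  by apply: lambda_form_Xset; rewrite sub_X ?mem_head.
by apply: IH => y Yy; rewrite sub_X // in_cons Yy orbT.
Qed.

Lemma size_Xset : size (Xset m K b) = (5 * m)%N.
Proof. by rewrite /Xset !size_cat size_map size_iota !size_nseq addnA -!mulSnr. Qed.

Lemma sum_Xset : \sum_(x <- Xset m K b) x = 0.
Proof.
have sum_cat (s1 s2 : seq rat) :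
  \sum_(x <- s1 ++ s2) x = \sum_(x <- s1) x + \sum_(x <- s2) x by exact: big_cat.
have sum_b : \sum_(i <- iota 1 (3 * m)) (b i)%:R = (m * K)%:R :> rat.
  by rewrite -natr_sum -b_sum /index_iota subSS subn0.
have sum_W : \sum_(i <- iota 1 (3 * m)) W m K = W m K *+ (3 * m).
  by rewrite big_const_seq count_predT size_iota iter_addr_0.
have sum_a : \sum_(i <- iota 1 (3 * m)) a m K b i = (m * K)%:R + W m K *+ (3 * m).
  by rewrite -sum_b -sum_W /a; exact: big_split.
rewrite /Xset !sum_cat big_map sum_a !big_nseq !iter_addr_0 /H /L.
by move: (W m K) (h m K) => w x; ring.
Qed.

Lemma lambda_form_subtree (T t : atree) :
  addition_tree_over (Xset m K b) T -> subtree t T -> lambda_form (5 * m) (tval t).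
Proof.
move=> HT /subtree_leaves [rest Hrest].
have HX : perm_eq (Xset m K b) (leaves t ++ rest).
  by apply: perm_trans Hrest; rewrite perm_sym.
rewrite tval_sum; apply: (@lambda_form_le (size (leaves t))).
  by rewrite -size_Xset (perm_size HX) size_cat leq_addr.
by apply: lambda_form_sum => x tx; rewrite (perm_mem HX) mem_cat tx.
Qed.

Lemma type0_sibling (u v : atree) : type0 m K b u ->
  `|tval u + tval v| <= (5 * m)%:R * `|tval u| -> lambda_form (5 * m) (tval v) ->
  type0 m K b v.
Proof.
move=> [su [su_lam u_eq]] uv_le [N [s [s_size s_le v_eq]]].
have s_lam : is_lambda_seq m s by rewrite /is_lambda_seq s_size.
suff N0 : N = 0.
  exists s; split; first exact: s_lam.
  by rewrite v_eq N0; move: (H m K) (lambda_sum m K b s) => y x; ring.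
rewrite u_eq v_eq in uv_le.
have lu_le := lambda_le su_lam; have lv_le := lambda_le s_lam; have H0 := H_gt0.
move: uv_le lu_le lv_le H0.
move: (lambda_sum m K b su) (lambda_sum m K b s) (H m K) => lu lv y uv_le lu_le lv_le y0.
rewrite -mulrDl !normrM (gtr0_norm y0) mulrA (ler_pM2r y0) addrA in uv_le.
have d_le : (500 * m%:R)^-1 <= 1 / 500 :> rat.
  have p500 : 0 < 500 :> rat by rewrite ltr0n.
  have pm : 0 < 500 * m%:R :> rat by apply: mulr_gt0 p500 _; rewrite ltr0n.
  rewrite div1r (lef_pV2 pm p500).
  by apply: ler_peMr; [exact: ltW p500 | rewrite ler1n].
have md : (5 * m)%:R * (500 * m%:R)^-1 = 1 / 100 :> rat.
  by rewrite natrM; field; rewrite pnatr_eq0 -lt0n.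
have lu_small : (5 * m)%:R * `|lu| <= 1 / 100.
  by rewrite -md; apply: ler_wpM2l lu_le; exact: ler0n.
exact: small_third_int_eq0 (le_trans uv_le lu_small) (le_trans lu_le d_le)
  (le_trans lv_le d_le).
Qed.

End Construction.

Theorem lemma2p5 (m K : nat) (b : nat -> nat) (Tmin : atree) :
  (0 < m)%N -> (0 < K)%N ->
  (forall i, (1 <= i <= 3 * m)%N ->
     (K%:R / 4 < (b i)%:R :> rat) /\ ((b i)%:R < K%:R / 2 :> rat)) ->
  (\sum_(1 <= i < (3 * m).+1) b i = m * K)%N ->
  min_cost_tree (Xset m K b) Tmin ->
  forall l r, subtree (ANode l r) Tmin ->
    (type0 m K b l -> type0 m K b r) /\ (type0 m K b r -> type0 m K b l).
Proof.
move=> m_gt0 K_gt0 b_bounds b_sum Tmin_min l r lr_sub.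
have b_le i : (1 <= i <= 3 * m)%N -> (b i <= K)%N.
  move=> /b_bounds [_ bK]; rewrite -(ler_nat rat); apply/ltW/(lt_le_trans bK).
  by rewrite ler_pdivrMr ?ltr0Sn // ler_peMr ?ler0n // ler1n.
have [l_sib r_sib] := min_cost_sibling_le Tmin_min lr_sub.
rewrite size_Xset (sum_Xset b_sum) normr0 !addr0 in l_sib r_sib.
have form t : subtree t (ANode l r) -> lambda_form m K b (5 * m) (tval t).
  move=> t_sub.
  exact (lambda_form_subtree m_gt0 K_gt0 (proj1 Tmin_min) (subtree_trans t_sub lr_sub)).
split => [l0 | r0].
- exact (type0_sibling m_gt0 K_gt0 b_le l0 l_sib (form _ (sub_r _ (sub_refl r)))).
- rewrite addrC in r_sib.
  exact (type0_sibling m_gt0 K_gt0 b_le r0 r_sib (form _ (sub_l _ (sub_refl l)))).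
Qed.
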